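(* Let $\mathbf M$ be an $(N+1,k)$-admissible and micro-reversible matrix with core $\widetilde{\mathbf M}$ and characteristic triple $(\mu,\widetilde{\mathbf w},\widetilde{\mathbf z})$; let $\mathbf K:=\frac1\mu\operatorname{diag}(\widetilde{\mathbf w})^{-1}\widetilde{\mathbf M}^\dagger\operatorname{diag}(\widetilde{\mathbf w})$ (the $Q$-process kernel) with stationary measure $\boldsymbol\pi=\widetilde{\mathbf w}\circ\widetilde{\mathbf z}$. Let $\mathbf p(t)$ solve $\frac{d\mathbf p}{dt}=(\mathbf M-\mathbf I)\mathbf p$ from a probability vector $\mathbf p(0)$ whose transient part $\widetilde{\mathbf p}(0)$ is nonzero, and set $\mathbf q(t):=\widetilde{\mathbf w}\circ\widetilde{\mathbf p}(t/\mu)/\langle\widetilde{\mathbf w},\widetilde{\mathbf p}(t/\mu)\rangle$. Then the evolution of $\mathbf p$ is variational in the sense that $\mathbf q$ is driven by the gradient flow $$\frac{d\mathbf q}{dt}=-\operatorname{grad}_{\mathcal W_N}H(\mathbf q\,|\,\boldsymbol\pi)$$ of the relative Boltzmann–Gibbs–Shannon entropy $H(\mathbf q|\boldsymbol\pi)=\sum_i q_i\log(q_i/\pi_i)$ with respect to the discrete Wasserstein structure $\mathcal W_N$ associated with $\mathbf K$, and the complete dynamics of $\mathbf p$ can be uniquely recovered from $\mathbf q$ (together with the initial datum $\mathbf p(0)$).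
   Context: Matrices are column-stochastic unless said otherwise; $\dagger$ is transpose, $\circ$ the entrywise product. For $1\le k<N-1$, an $(N+1)\times(N+1)$ column-stochastic $\mathbf M$ is $(N+1,k)$-admissible if, after a simultaneous permutation of rows and columns, $\mathbf M=\begin{pmatrix}\widetilde{\mathbf M}&\mathbf 0\\ \mathbf A&\mathbf I\end{pmatrix}$ with $\mathbf I$ the $k\times k$ identity, $\widetilde{\mathbf M}$ irreducible of size $N+1-k$ (the core, acting on the transient states; $\widetilde{\mathbf p}$ denotes the transient components of $\mathbf p$), and $\mathbf A$ with no zero row. The characteristic triple is $\mu=\rho(\widetilde{\mathbf M})\in(0,1)$ together with the positive left/right eigenvectors $\widetilde{\mathbf w},\widetilde{\mathbf z}$ for $\mu$ with $\langle\widetilde{\mathbf w},\mathbf 1\rangle=\langle\widetilde{\mathbf w},\widetilde{\mathbf z}\rangle=1$. $\mathbf M$ is micro-reversible if $\widetilde w_i\widetilde M_{ij}\widetilde z_j=\widetilde w_j\widetilde M_{ji}\widetilde z_i$ for all $i,j$; then $\mathbf K$ is irreducible, row-stochastic and reversible ($\pi_iK_{ij}=\pi_jK_{ji}$). Discrete Wasserstein distance (Maas): with the logarithmic mean $\beta(x,y)=\frac{x-y}{\log x-\log y}$ for $x\ne y$, $\beta(x,x)=x$, for probability densities $\mathbf Q^0,\mathbf Q^1$ w.r.t. $\boldsymbol\pi$ (nonnegative vectors with $\sum_iQ_i\pi_i=1$), $\mathcal W_N^2(\mathbf Q^0,\mathbf Q^1)$ is the infimum of $\frac12\int_0^1\sum_{i,j}|\psi_i^\tau-\psi_j^\tau|^2K_{ij}\beta(Q_i^\tau,Q_j^\tau)\pi_i\,d\tau$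 over piecewise $C^1$ curves $\tau\mapsto\mathbf Q^\tau$ of probability densities and measurable $\tau\mapsto\boldsymbol\psi^\tau$ with $\frac{d}{d\tau}Q_i^\tau+\sum_j(\psi_j^\tau-\psi_i^\tau)K_{ij}\beta(Q_i^\tau,Q_j^\tau)=0$ a.e. and endpoints $\mathbf Q^0,\mathbf Q^1$; a probability vector $\mathbf q$ is identified with its density $\mathbf Q=\mathbf q/\boldsymbol\pi$. On strictly positive densities this is a Riemannian metric, and the gradient of $F(\mathbf Q)=\sum_if(Q_i)\pi_i$ is given in coordinates by $[\operatorname{grad}_{\mathcal W_N}F(\mathbf Q)]_i=-\sum_jK_{ij}\beta(Q_i,Q_j)\big(f'(Q_j)-f'(Q_i)\big)$. *)

From HB Require Import structures.
From mathcomp Require Import all_boot all_order all_algebra.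
From mathcomp Require Import complex.
From mathcomp Require Import all_classical all_reals all_analysis.
Set Implicit Arguments.
Unset Strict Implicit.
Unset Printing Implicit Defensive.
Import Order.TTheory GRing.Theory Num.Theory.
Import numFieldNormedType.Exports.
Local Open Scope ring_scope.

Section Defs.
Variable R : realType.

Definition col_stochastic (n : nat) (M : 'M[R]_n) : Prop :=
  (forall i j, 0 <= M i j) /\ (forall j, \sum_i M i j = 1).

Definition irreducible_mx (n : nat) (A : 'M[R]_n) : Prop :=
  (forall i j, 0 <= A i j) /\ (forall i j, exists m : nat, 0 < (A ^+ m) i j).

Definition is_spectral_radius (n : nat) (A : 'M[R]_n) (r : R) : Prop :=
  let AC := map_mx (fun x : R => (x%:C)%C) A in
  (exists2 l : R[i], eigenvalue AC l & Normc.normc l = r) /\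
  (forall l : R[i], eigenvalue AC l -> Normc.normc l <= r).

Definition core (N k : nat) (M : 'M[R]_N.+1) (tr : 'I_(N.+1 - k) -> 'I_N.+1)
  : 'M[R]_(N.+1 - k) := \matrix_(i, j) M (tr i) (tr j).

(* (N+1,k)-admissibility: after the simultaneous relabelling of indices given by
   the transient states tr and absorbing states ab (together a bijection onto
   'I_(N+1), since they are injective, disjoint and (N+1-k)+k = N+1),
   M = [[Mt, 0], [A, I]] with Mt irreducible and A without zero row. *)
Definition admissible (N k : nat) (M : 'M[R]_N.+1)
  (tr : 'I_(N.+1 - k) -> 'I_N.+1) (ab : 'I_k -> 'I_N.+1) : Prop :=
  [/\ (1 <= k)%N /\ (k < N - 1)%N,
      col_stochastic M,
      injective tr /\ injective ab /\ (forall i a, tr i <> ab a),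
      (forall i b, M (tr i) (ab b) = 0) /\
      (forall a b, M (ab a) (ab b) = (a == b)%:R)
    & irreducible_mx (core M tr) /\
      (forall a, exists j, M (ab a) (tr j) <> 0)].

Definition char_triple (n : nat) (Mt : 'M[R]_n) (mu : R) (w z : 'I_n -> R)
  : Prop :=
  [/\ is_spectral_radius Mt mu /\ 0 < mu < 1,
      ((forall i, 0 < w i) /\ (forall i, 0 < z i)),
      ((forall j, \sum_i w i * Mt i j = mu * w j) /\
       (forall i, \sum_j Mt i j * z j = mu * z i))
    & (\sum_i w i = 1 /\ \sum_i w i * z i = 1)].

Definition micro_reversible (n : nat) (Mt : 'M[R]_n) (w z : 'I_n -> R) : Prop :=
  forall i j, w i * Mt i j * z j = w j * Mt j i * z i.

Definition Qkernel (n : nat) (Mt : 'M[R]_n) (mu : R) (w : 'I_n -> R)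
  : 'M[R]_n := \matrix_(i, j) (mu^-1 * (w i)^-1 * Mt j i * w j).

Definition statmeas (n : nat) (w z : 'I_n -> R) : 'I_n -> R := fun i => w i * z i.

Definition logmean (x y : R) : R :=
  if x == y then x else (x - y) / (ln x - ln y).

(* density of the relative Boltzmann-Gibbs-Shannon entropy:
   H(q|pi) = sum_i q_i log(q_i/pi_i) = sum_i f(Q_i) pi_i with Q = q/pi *)
Definition bgs (x : R) : R := x * ln x.

Definition Ffun (n : nat) (f : R -> R) (pi : 'I_n -> R) (Q : 'I_n -> R) : R :=
  \sum_i f (Q i) * pi i.

(* Wasserstein gradient of F(Q) = sum_i f(Q_i) pi_i w.r.t. the discrete
   Wasserstein structure W_N of the kernel K, in coordinates (Maas). *)
Definition Wgrad (n : nat) (K : 'M[R]_n) (f : R -> R) (Q : 'I_n -> R) (i : 'I_n)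
  : R :=
  - \sum_j K i j * logmean (Q i) (Q j) * (derive1 f (Q j) - derive1 f (Q i)).

Definition qflow (N k : nat) (p : R -> 'cV[R]_N.+1)
  (tr : 'I_(N.+1 - k) -> 'I_N.+1) (mu : R) (w : 'I_(N.+1 - k) -> R)
  (t : R) (i : 'I_(N.+1 - k)) : R :=
  w i * p (t / mu) (tr i) 0 / \sum_j w j * p (t / mu) (tr j) 0.

End Defs.

From HB Require Import structures.
From mathcomp Require Import all_boot all_order all_algebra.
From mathcomp Require Import complex.
From mathcomp Require Import all_classical all_reals all_analysis.
From mathcomp Require Import ring lra zify.
Set Implicit Arguments.
Unset Strict Implicit.
Unset Printing Implicit Defensive.
Import Order.TTheory GRing.Theory Num.Theory.
Import numFieldNormedType.Exports.
Local Open Scope ring_scope.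

(* Since M has no transition from an absorbing to a transient state, the
   transient coordinates x(s) = p~(s) solve the closed system x' = (Mt - 1) x.
   As w is a left eigenvector of Mt for mu, the mass <w, x> decays exactly like
   exp((mu - 1) s), so the normalised vector x / <w, x> solves y' = (Mt - mu) y.
   Rescaling time by mu and dividing by pi = w o z turns this into Q' = (K - 1) Q
   for the density Q = q / pi: micro-reversibility is what rewrites the
   coefficients mu^-1 Mt_ij z_j / z_i as those of K.  For f(x) = x log x the
   logarithmic mean exactly undoes the difference of logarithms in f', so
   -grad H(q | pi) is also (K - 1) Q, provided Q > 0; positivity for t > 0
   comes from the irreducibility of Mt, applied to u = e^s x, which solves
   u' = Mt u with Mt >= 0.
   Conversely x is read off q and the known mass, and each absorbing coordinate
   is the integral of its right-hand side, which only involves x. *)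

Lemma sum_disjoint_images (V : nmodType) (T I J : finType) (f : I -> T) (g : J -> T)
    (F : T -> V) :
  injective f -> injective g -> (forall i j, f i <> g j) -> (#|I| + #|J| = #|T|)%N ->
  \sum_x F x = \sum_i F (f i) + \sum_j F (g j).
Proof.
move=> f_inj g_inj fg_neq card_IJ.
have fg_disj : [disjoint f @: I & g @: J].
  by apply/pred0P => x /=; apply/negP => /andP[/imsetP[i _ ->] /imsetP[j _ /fg_neq]].
have fg_cover : f @: I :|: g @: J = [set: T].
  apply/eqP; rewrite eqEcard finset.subsetT cardsT /=.
  have [_] := leq_card_setU (f @: I) (g @: J).
  by rewrite fg_disj => /eqP ->; rewrite !card_imset // card_IJ.
rewrite (eq_bigl [predU f @: I & g @: J]) => [|x]; last first.
  by move: (finset.in_setT x); rewrite -fg_cover inE.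
rewrite bigU //= !big_imset //= => x y _ _; by [apply: f_inj | apply: g_inj].
Qed.

Section AbsorbingBlocks.
Variables (R : realType) (N k : nat) (M : 'M[R]_N.+1).
Variables (tr : 'I_(N.+1 - k) -> 'I_N.+1) (ab : 'I_k -> 'I_N.+1).
Hypotheses (k_le : (k <= N.+1)%N) (tr_inj : injective tr) (ab_inj : injective ab).
Hypothesis tr_ab : forall i a, tr i <> ab a.

Lemma sum_transient_absorbing (F : 'I_N.+1 -> R) :
  \sum_x F x = \sum_i F (tr i) + \sum_a F (ab a).
Proof. by apply: sum_disjoint_images; rewrite // !card_ord subnK. Qed.

Lemma generator_transient (v : 'cV[R]_N.+1) j :
  (forall i b, M (tr i) (ab b) = 0) ->
  ((M - 1%:M) *m v) (tr j) 0 = \sum_l core M tr j l * v (tr l) 0 - v (tr j) 0.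
Proof.
move=> M_tr_ab; rewrite mxE sum_transient_absorbing.
rewrite [X in _ + X]big1 ?addr0 => [|a _]; last first.
  by rewrite !mxE M_tr_ab; case: eqP => [/tr_ab|] //; rewrite subr0 mul0r.
rewrite (eq_bigr (fun l => core M tr j l * v (tr l) 0 - (j == l)%:R * v (tr l) 0));
  last by move=> l _; rewrite !mxE (inj_eq tr_inj) mulrBl.
rewrite sumrB [X in _ - X = _](bigD1 j) //= eqxx mul1r.
rewrite [X in v _ 0 + X]big1 ?addr0 // => l.
by rewrite eq_sym => /negbTE ->; rewrite mul0r.
Qed.

Lemma generator_absorbing (v : 'cV[R]_N.+1) a :
  (forall a b, M (ab a) (ab b) = (a == b)%:R) ->
  ((M - 1%:M) *m v) (ab a) 0 = \sum_l M (ab a) (tr l) * v (tr l) 0.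
Proof.
move=> M_ab_ab; rewrite mxE sum_transient_absorbing.
rewrite [X in _ + X]big1 ?addr0 => [|b _]; last first.
  by rewrite !mxE M_ab_ab (inj_eq ab_inj) subrr mul0r.
apply: eq_bigr => l _; rewrite !mxE.
by case: eqP => [abl|]; [case: (tr_ab (esym abl)) | rewrite subr0].
Qed.

End AbsorbingBlocks.

Section RealAnalysis.
Variable R : realType.
Local Open Scope classical_set_scope.

Lemma is_derive_continuous (f df : R -> R) :
  (forall x : R, is_derive x 1 f (df x)) -> continuous f.
Proof.
by move=> fdf x; apply/differentiable_continuous/derivable1_diffP; case: (fdf x).
Qed.

Lemma is_derive_gt0_lt (f df : R -> R) (a b : R) : a < b ->
  (forall x : R, is_derive x 1 f (df x)) -> (forall x, a < x < b -> 0 < df x) ->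
  f a < f b.
Proof.
move=> ab fdf df_gt0; rewrite -subr_gt0.
have [c] := MVT ab (fun x _ => fdf x)
  (continuous_subspaceT (is_derive_continuous fdf)).
by rewrite in_itv /= => /df_gt0 ? ->; rewrite mulr_gt0 ?subr_gt0.
Qed.

Lemma is_derive_ge0_le (f df : R -> R) (a b : R) : a <= b ->
  (forall x : R, is_derive x 1 f (df x)) -> (forall x, a < x < b -> 0 <= df x) ->
  f a <= f b.
Proof.
move=> + fdf df_ge0; rewrite le_eqVlt => /predU1P[-> //|ab]; rewrite -subr_ge0.
have [c] := MVT ab (fun x _ => fdf x)
  (continuous_subspaceT (is_derive_continuous fdf)).
by rewrite in_itv /= => /df_ge0 dfc_ge0 ->; rewrite mulr_ge0 // subr_ge0 ltW.
Qed.

Lemma is_derive_expRM (c s : R) :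
  is_derive s 1 (fun x => expR (c * x)) (expR (c * s) * c).
Proof.
have : is_derive s 1 (fun x : R => c * x) (c * 1) := is_deriveZ c (is_derive_id s 1).
rewrite mulr1 => cx_deriv.
exact: (is_derive1_comp (f := expR) (g := fun x : R => c * x)).
Qed.

Lemma is_derive_wsum n (c : 'I_n -> R) (f : 'I_n -> R -> R) (df : 'I_n -> R) (s : R) :
  (forall j, is_derive s 1 (f j) (df j)) ->
  is_derive s 1 (fun s => \sum_j c j * f j s) (\sum_j c j * df j).
Proof.
move=> f_deriv; have := is_derive_sum (fun j => is_deriveZ (c j) (f_deriv j)).
by rewrite (_ : \sum_j _ = fun s => \sum_j c j * f j s) // funeqE => y; rewrite fct_sumE.
Qed.

Lemma is_derive_scalar_ode (f : R -> R) (c : R) :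
  (forall s : R, is_derive s 1 f (c * f s)) -> forall s, f s = f 0 * expR (c * s).
Proof.
move=> f_ode s.
have g_deriv (y : R) : is_derive y 1 (fun y => f y * expR (- c * y)) 0.
  have := is_deriveM (f_ode y) (is_derive_expRM (- c) y).
  by move/is_derive_eq; apply; rewrite /GRing.scale /=; ring.
have := is_derive_0_is_cst s 0 g_deriv; rewrite mulr0 expR0 mulr1 => <-.
by rewrite -mulrA -expRD mulNr addNr expR0 mulr1.
Qed.

Lemma Rintegral_FTC (F f : R -> R) (a b : R) : a <= b ->
  (forall x : R, is_derive x 1 F (f x)) -> continuous f ->
  F b = F a + \int[lebesgue_measure]_(x in `[a, b]) f x.
Proof.
rewrite le_eqVlt => /predU1P[<- _ _|ab F_deriv f_cont].
  by rewrite set_itv1 Rintegral_set1 addr0.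
have F_cont := is_derive_continuous F_deriv.
rewrite /Rintegral (@continuous_FTC2 R f F a b ab (continuous_subspaceT f_cont)).
- by rewrite -EFinB /= addrC subrK.
- split; first by move=> y _; case: (F_deriv y).
  + exact: cvg_at_right_filter (F_cont a).
  + exact: cvg_at_left_filter (F_cont b).
- by move=> y _; rewrite derive1E; case: (F_deriv y) => _ ->.
Qed.

Lemma closed_contains_inf (E : set R) :
  closed E -> E !=set0 -> has_lbound E -> E (inf E).
Proof.
move=> E_closed E_neq0 E_lb; apply: itv_closed_infimums => //.
by split; [exact: ge_inf | move=> x; exact: lb_le_inf].
Qed.

Lemma first_nonpositive_time n (v : 'I_n -> R -> R) (s1 : R) :
  (forall j, continuous (v j)) -> 0 <= s1 -> (exists j, v j s1 <= 0) ->
  exists2 s, 0 <= s /\ (exists j, v j s <= 0) &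
    forall t, 0 <= t < s -> forall j, 0 < v j t.
Proof.
move=> v_cont s1_ge0 v_s1.
pose E : set R := [set s | 0 <= s /\ exists j, v j s <= 0].
have E_closed : closed E.
  have -> : E = [set s | 0 <= s] `&`
      \bigcup_(j in [set: 'I_n]) (v j @^-1` [set y | y <= 0]).
    by apply/seteqP; split => s [s_ge0 [j vj]]; split => //; exists j.
  apply: closedI; first exact: closed_ge.
  apply: closed_bigcup => [|j _]; first exact: finite_finset.
  by apply: preimage_closed; [move=> s _; exact: v_cont | exact: closed_le].
have E_lb : has_lbound E by exists 0 => s [].
have E_neq0 : E !=set0 by exists s1; split.
exists (inf E); first exact: closed_contains_inf E_closed E_neq0 E_lb.
move=> t /andP[t_ge0 t_lt] j; rewrite ltNge; apply/negP => vt_le0.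
by move: t_lt; rewrite ltNge ge_inf //; split => //; exists j.
Qed.

Lemma mxpowS_gt0 n (A : 'M[R]_n) m i j : (forall i j, 0 <= A i j) ->
  0 < (A ^+ m.+1) i j -> exists2 l, 0 < (A ^+ m) i l & 0 < A l j.
Proof.
move=> A_ge0; rewrite exprSr mxE => sum_gt0; apply: contrapT => no_l.
move: sum_gt0; apply/negP; rewrite -leNgt; apply: sumr_le0 => l _.
rewrite leNgt; apply/negP => prod_gt0; apply: no_l.
have Alj_gt0 : 0 < A l j.
  by rewrite lt_neqAle A_ge0 andbT; apply: contraTneq prod_gt0 => <-; rewrite mulr0 ltxx.
by exists l; rewrite // -(pmulr_lgt0 _ Alj_gt0).
Qed.

Section LinearODE.
Variables (n : nat) (A : 'M[R]_n) (u : 'I_n -> R -> R).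
Hypothesis A_ge0 : forall i j, 0 <= A i j.
Hypothesis u_ode : forall j (s : R), is_derive s 1 (u j) (\sum_l A j l * u l s).
Hypothesis u0_ge0 : forall j, 0 <= u j 0.

(* At the first time u_j + eps e^{cs} vanishes, every u_l is > -eps e^{cs},
   which makes the derivative of u_j + eps e^{cs} positive on the way. *)
Lemma linear_ode_perturbed_gt0 (c eps : R) : (forall j, \sum_l A j l < c) -> 0 < eps ->
  forall s, 0 <= s -> forall j, 0 < u j s + eps * expR (c * s).
Proof.
move=> rowsum_lt eps_gt0 s1 s1_ge0 j1; rewrite ltNge; apply/negP => v1_le0.
pose v j s := u j s + eps * expR (c * s).
have v_deriv j (s : R) :
    is_derive s 1 (v j) (\sum_l A j l * u l s + eps * (expR (c * s) * c)).
  exact: is_deriveD (u_ode j s) (is_deriveZ eps (is_derive_expRM c s)).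
have v0_gt0 j : 0 < v j 0 by rewrite /v mulr0 expR0 mulr1 ltr_wpDl.
have [s [s_ge0 [j vj_le0]] v_gt0] := first_nonpositive_time
  (fun j => is_derive_continuous (v_deriv j)) s1_ge0 (ex_intro _ j1 v1_le0).
have s_gt0 : 0 < s.
  by rewrite lt_neqAle s_ge0 andbT; apply: contraTneq vj_le0 => <-; rewrite -ltNge.
suff : v j 0 < v j s by rewrite ltNge (le_trans vj_le0) // ltW.
apply: is_derive_gt0_lt s_gt0 (v_deriv j) _ => x /andP[x_gt0 x_lt].
have ul_gt l : - (eps * expR (c * x)) < u l x.
  by rewrite -subr_gt0 opprK; apply: v_gt0; rewrite ltW ?x_lt.
have : - (eps * expR (c * x)) * \sum_l A j l <= \sum_l A j l * u l x.
  by rewrite mulr_sumr ler_sum // => l _; rewrite mulrC ler_wpM2l // ltW.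
have := rowsum_lt j; have : 0 < eps * expR (c * x) by rewrite mulr_gt0 ?expR_gt0.
nra.
Qed.

Lemma linear_ode_ge0 s : 0 <= s -> forall j, 0 <= u j s.
Proof.
move=> s_ge0 j; pose c := \sum_i \sum_l A i l + 1.
have rowsum_lt i : \sum_l A i l < c.
  rewrite /c [X in _ < X + 1](bigD1 i) //= -addrA ltrDl ltr_wpDl //.
  by apply: sumr_ge0 => i' _; exact: sumr_ge0.
apply/ler_addgt0Pr => e e_gt0; apply: ltW.
have := linear_ode_perturbed_gt0 rowsum_lt (_ : 0 < e / expR (c * s)) s_ge0 j.
by rewrite -mulrA mulVf ?gt_eqF ?expR_gt0 // mulr1; apply; rewrite divr_gt0 ?expR_gt0.
Qed.

Lemma linear_ode_gt0_edge l j : 0 < A l j ->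
  (forall s, 0 < s -> 0 < u j s) -> forall s, 0 < s -> 0 < u l s.
Proof.
move=> Alj_gt0 uj_gt0 s s_gt0; apply: le_lt_trans (u0_ge0 l) _.
apply: is_derive_gt0_lt s_gt0 (u_ode l) _ => x /andP[x_gt0 _].
rewrite (bigD1 j) //= ltr_wpDr ?mulr_gt0 ?uj_gt0 //.
by apply: sumr_ge0 => k _; rewrite mulr_ge0 // linear_ode_ge0 // ltW.
Qed.

Lemma linear_ode_gt0 : (forall i j, exists m, 0 < (A ^+ m) i j) ->
  (exists j, 0 < u j 0) -> forall s, 0 < s -> forall i, 0 < u i s.
Proof.
move=> A_irr [j uj0_gt0] s s_gt0 i.
have uj_gt0 t : 0 < t -> 0 < u j t.
  move=> t_gt0; apply: lt_le_trans uj0_gt0 _.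
  apply: is_derive_ge0_le (ltW t_gt0) (u_ode j) _ => x /andP[x_gt0 _].
  by apply: sumr_ge0 => k _; rewrite mulr_ge0 // linear_ode_ge0 // ltW.
suff path m i' j' : 0 < (A ^+ m) i' j' ->
    (forall t, 0 < t -> 0 < u j' t) -> forall t, 0 < t -> 0 < u i' t.
  by have [m Aij_gt0] := A_irr i j; exact: path Aij_gt0 uj_gt0 s s_gt0.
elim: m i' j' => [|m IHm] i' j'.
  by rewrite expr0 mxE; case: eqVneq => [-> //|]; rewrite ltxx.
move=> /(mxpowS_gt0 A_ge0) [l Ail_gt0 Alj_gt0] uj'_gt0.
exact: IHm Ail_gt0 (linear_ode_gt0_edge Alj_gt0 uj'_gt0).
Qed.

End LinearODE.
End RealAnalysis.

Section Entropy.
Variable R : realType.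

Lemma derive1_bgs (x : R) : 0 < x -> derive1 (@bgs R) x = ln x + 1.
Proof.
move=> x_gt0; rewrite derive1E.
have [_ ->] := is_deriveM (is_derive_id x 1) (is_derive1_ln x_gt0).
by rewrite /GRing.scale /= mulfV ?gt_eqF // mulr1 addrC.
Qed.

Lemma logmean_ln_sub (x y : R) : 0 < x -> 0 < y ->
  logmean x y * (ln y - ln x) = y - x.
Proof.
move=> x_gt0 y_gt0; rewrite /logmean; case: eqP => [->|/eqP x_neq_y].
  by rewrite !subrr mulr0.
have : ln x - ln y != 0.
  by rewrite subr_eq0; apply: contra x_neq_y => /eqP/ln_inj -> //; rewrite inE posrE.
by move=> ln_neq0; field.
Qed.

Lemma Wgrad_bgs n (K : 'M[R]_n) (Q : 'I_n -> R) i : (forall j, 0 < Q j) ->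
  - Wgrad K (@bgs R) Q i = \sum_j K i j * (Q j - Q i).
Proof.
move=> Q_gt0; rewrite /Wgrad opprK; apply: eq_bigr => j _.
by rewrite !derive1_bgs // opprD addrACA subrr addr0 -mulrA logmean_ln_sub.
Qed.

Section QKernel.
Variables (n : nat) (Mt : 'M[R]_n) (mu : R) (w z : 'I_n -> R).
Hypotheses (w_gt0 : forall i, 0 < w i) (z_gt0 : forall i, 0 < z i).
Hypothesis Mt_rev : micro_reversible Mt w z.

Lemma Qkernel_micro_reversible i j : Qkernel Mt mu w i j = mu^-1 * Mt i j * z j / z i.
Proof.
rewrite mxE; have -> : Mt j i = w i * Mt i j * z j / (w j * z i).
  by rewrite -Mt_rev; field; rewrite !gt_eqF.
by rewrite -!mulrA; congr (_ * _); field; rewrite !gt_eqF.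
Qed.

Lemma Qkernel_row_sum i : 0 < mu -> (forall i, \sum_j Mt i j * z j = mu * z i) ->
  \sum_j Qkernel Mt mu w i j = 1.
Proof.
move=> mu_gt0 Mt_z.
rewrite (eq_bigr (fun j => (mu * z i)^-1 * (Mt i j * z j))) => [|j _].
  by rewrite -mulr_sumr Mt_z mulVf // mulf_neq0 ?gt_eqF.
by rewrite Qkernel_micro_reversible invfM; ring.
Qed.

End QKernel.
End Entropy.

Definition mass (R : realType) n (w : 'I_n -> R) (x : 'I_n -> R -> R) (s : R) : R :=
  \sum_j w j * x j s.

Definition profile (R : realType) n (mu : R) (w : 'I_n -> R) (x : 'I_n -> R -> R)
  (t : R) (i : 'I_n) : R := w i * x i (t / mu) / mass w x (t / mu).

Section TransientFlow.
Variables (R : realType) (n : nat) (Mt : 'M[R]_n) (mu : R) (w z : 'I_n -> R).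
Variable x : 'I_n -> R -> R.
Hypothesis x_ode : forall j (s : R), is_derive s 1 (x j) (\sum_l Mt j l * x l s - x j s).
Hypothesis w_left : forall j, \sum_i w i * Mt i j = mu * w j.

Lemma mass_deriv (s : R) : is_derive s 1 (mass w x) ((mu - 1) * mass w x s).
Proof.
apply: is_derive_eq (is_derive_wsum w (fun j => x_ode j s)) _.
under eq_bigr do rewrite mulrBr mulr_sumr.
rewrite sumrB exchange_big /= mulrBl mul1r mulr_sumr; congr (_ - _).
apply: eq_bigr => l _; under eq_bigr do rewrite mulrA.
by rewrite -mulr_suml w_left mulrA.
Qed.

Lemma mass_expR s : mass w x s = mass w x 0 * expR ((mu - 1) * s).
Proof. exact: is_derive_scalar_ode mass_deriv s. Qed.

Hypotheses (w_gt0 : forall i, 0 < w i) (x0_ge0 : forall j, 0 <= x j 0).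
Hypothesis x0_gt0 : exists j, 0 < x j 0.

Lemma mass_gt0 s : 0 < mass w x s.
Proof.
rewrite mass_expR mulr_gt0 ?expR_gt0 //; have [j xj0_gt0] := x0_gt0.
rewrite /mass (bigD1 j) //= ltr_wpDr ?mulr_gt0 //.
by apply: sumr_ge0 => i _; rewrite mulr_ge0 // ltW.
Qed.

Lemma profile_recover s j : mu != 0 ->
  mass w x 0 * expR ((mu - 1) * s) * profile mu w x (mu * s) j / w j = x j s.
Proof.
move=> mu_neq0; rewrite /profile [mu * s / mu]mulrC mulKf // -mass_expR.
by field; rewrite !gt_eqF ?mass_gt0.
Qed.

Lemma normalized_deriv i (s : R) :
  is_derive s 1 (fun s => x i s / mass w x s)
    ((\sum_l Mt i l * x l s - mu * x i s) / mass w x s).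
Proof.
have mass_neq0 : mass w x s != 0 by rewrite gt_eqF ?mass_gt0.
have := is_deriveM (x_ode i s) (is_deriveV mass_neq0 (mass_deriv s)).
by move/is_derive_eq; apply; rewrite /GRing.scale /=; field.
Qed.

Hypotheses (Mt_ge0 : forall i j, 0 <= Mt i j).
Hypothesis Mt_irr : forall i j, exists m, 0 < (Mt ^+ m) i j.

Lemma transient_gt0 s : 0 < s -> forall j, 0 < x j s.
Proof.
pose u j s := expR s * x j s.
have u_ode j (s' : R) : is_derive s' 1 (u j) (\sum_l Mt j l * u l s').
  have := is_deriveM (is_derive_expR s') (x_ode j s').
  move/is_derive_eq; apply; rewrite /GRing.scale /= /u mulrBr mulr_sumr.
  by under [in RHS]eq_bigr do rewrite mulrCA; rewrite [x j s' * _]mulrC subrK.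
have u0_gt0 : exists j, 0 < u j 0.
  by have [j xj0_gt0] := x0_gt0; exists j; rewrite /u expR0 mul1r.
move=> s_gt0 j; have := linear_ode_gt0 Mt_ge0 u_ode _ Mt_irr u0_gt0 s_gt0 j.
by rewrite pmulr_rgt0 ?expR_gt0 //; apply; move=> j'; rewrite /u expR0 mul1r.
Qed.

Hypotheses (mu_gt0 : 0 < mu) (z_gt0 : forall i, 0 < z i).
Hypotheses (z_right : forall i, \sum_j Mt i j * z j = mu * z i).
Hypothesis Mt_rev : micro_reversible Mt w z.

Lemma profile_gradient_flow i (t : R) : 0 < t ->
  is_derive t 1 (fun s => profile mu w x s i / statmeas w z i)
    (- Wgrad (Qkernel Mt mu w) (@bgs R)
         (fun j => profile mu w x t j / statmeas w z j) i).
Proof.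
move=> t_gt0; have s_gt0 : 0 < t / mu by rewrite divr_gt0.
have mass_neq0 : mass w x (t / mu) != 0 by rewrite gt_eqF ?mass_gt0.
have Q_gt0 j : 0 < profile mu w x t j / statmeas w z j.
  by rewrite !divr_gt0 ?mulr_gt0 ?transient_gt0 ?mass_gt0.
have QE j : profile mu w x t j / statmeas w z j =
    x j (t / mu) / (z j * mass w x (t / mu)).
  by rewrite /profile /statmeas; field; rewrite !gt_eqF ?mass_gt0.
have time_deriv : is_derive t 1 (fun s : R => s / mu) mu^-1.
  have := is_deriveM (is_derive_id t 1) (is_derive_cst mu^-1 t 1).
  by move/is_derive_eq; apply; rewrite /GRing.scale /= mulr0 add0r mulr1.
have := is_deriveZ (z i)^-1
  (is_derive1_comp (g := fun s : R => s / mu) (normalized_deriv i (t / mu)) time_deriv).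
rewrite (_ : _ \*: _ = fun s => profile mu w x s i / statmeas w z i); last first.
  apply/funext => s; rewrite /profile /statmeas /= /GRing.scale /=.
  by field; rewrite !gt_eqF ?mass_gt0.
move/is_derive_eq; apply; rewrite Wgrad_bgs //.
under [in RHS]eq_bigr do rewrite mulrBr.
rewrite sumrB -mulr_suml (Qkernel_row_sum w_gt0 z_gt0) // mul1r.
rewrite [in RHS](eq_bigr (fun j =>
  (mu * z i * mass w x (t / mu))^-1 * (Mt i j * x j (t / mu)))) => [|j _].
  by rewrite -mulr_sumr QE /GRing.scale /=; field; rewrite mass_neq0 !gt_eqF.
rewrite (Qkernel_micro_reversible _ w_gt0 z_gt0) // QE.
by field; rewrite mass_neq0 !gt_eqF.
Qed.

End TransientFlow.

Theorem theorem2 (R : realType) (N k : nat) (M : 'M[R]_N.+1)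
  (tr : 'I_(N.+1 - k) -> 'I_N.+1) (ab : 'I_k -> 'I_N.+1)
  (mu : R) (w z : 'I_(N.+1 - k) -> R) (p : R -> 'cV[R]_N.+1) :
  admissible M tr ab ->
  char_triple (core M tr) mu w z ->
  micro_reversible (core M tr) w z ->
  (* p solves dp/dt = (M - I) p *)
  (forall (t : R) (i : 'I_N.+1),
      is_derive t 1 (fun s => p s i 0) (((M - 1%:M) *m p t) i 0)) ->
  (* p(0) is a probability vector with nonzero transient part *)
  (forall i, 0 <= p 0 i 0) -> \sum_i p 0 i 0 = 1 ->
  (exists i, p 0 (tr i) 0 <> 0) ->
  let K := Qkernel (core M tr) mu w in
  let pi := statmeas w z in
  let q := qflow p tr mu w in
  (* gradient flow of H(.|pi) w.r.t. W_N, written in the density Q = q/pi *)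
  (forall (t : R) (i : 'I_(N.+1 - k)), 0 < t ->
      is_derive t 1 (fun s => q s i / pi i)
        (- Wgrad K (@bgs R) (fun j => q t j / pi j) i)) /\
  (* p is recovered from q and p(0) *)
  (let S0 := \sum_j w j * p 0 (tr j) 0 in
   let pt := fun (s : R) (j : 'I_(N.+1 - k)) =>
               S0 * expR ((mu - 1) * s) * q (mu * s) j / w j in
   forall t : R, 0 <= t ->
     (forall i, p t (tr i) 0 = pt t i) /\
     (forall a, p t (ab a) 0 =
        p 0 (ab a) 0 +
        \int[lebesgue_measure]_(s in `[0, t]%classic)
           (\sum_j M (ab a) (tr j) * pt s j))).
Proof.
move=> [[_ k_lt] [M_ge0 _] [tr_inj [ab_inj tr_ab]] [M_tr_ab M_ab_ab] [[_ Mt_irr] _]].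
move=> [[_ /andP[mu_gt0 _]] [w_gt0 z_gt0] [w_left z_right] _] Mt_rev p_ode p0_ge0 _.
move=> [i0 p0i0_neq0] K pi q.
have k_le : (k <= N.+1)%N by lia.
pose x j s := p s (tr j) 0.
have x_ode j (s : R) : is_derive s 1 (x j) (\sum_l core M tr j l * x l s - x j s).
  by rewrite -(generator_transient k_le tr_inj ab_inj tr_ab _ _ M_tr_ab); exact: p_ode.
have Mt_ge0 i j : 0 <= core M tr i j by rewrite mxE; exact: M_ge0.
have x0_ge0 j : 0 <= x j 0 by exact: p0_ge0.
have x0_gt0 : exists j, 0 < x j 0.
  by exists i0; rewrite lt_neqAle eq_sym p0_ge0 andbT; apply/eqP.
have x_recover s j :=
  profile_recover x_ode w_left w_gt0 x0_ge0 x0_gt0 s j (lt0r_neq0 mu_gt0).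
split => [t i t_gt0|S0 pt t t_ge0].
  exact: (profile_gradient_flow x_ode w_left w_gt0 x0_ge0 x0_gt0 Mt_ge0 Mt_irr mu_gt0
    z_gt0 z_right Mt_rev i t_gt0).
split => [i|a]; first exact: esym (x_recover t i).
have absorbing_ode (s : R) :
    is_derive s 1 (fun s => p s (ab a) 0) (\sum_j M (ab a) (tr j) * x j s).
  by rewrite -(generator_absorbing k_le tr_inj ab_inj tr_ab _ _ M_ab_ab); exact: p_ode.
have -> : (fun s => \sum_j M (ab a) (tr j) * pt s j) =
    fun s => \sum_j M (ab a) (tr j) * x j s.
  by apply/funext => s; apply: eq_bigr => j _; congr (_ * _); exact: x_recover.
apply: Rintegral_FTC t_ge0 absorbing_ode _.
exact: is_derive_continuous (fun s => is_derive_wsum _ (fun j => x_ode j s)).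
Qed.
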